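(* Logical convergence does not in general imply convergence in the $n$-bisimulation topology: there exist a countable atom set $\Phi$, a finite agent set $I$, a logic $\Lambda$, an $\boldsymbol{\mathcal{L}}_\Lambda$ modal space $\boldsymbol{X}$ in which modal equivalence and bisimilarity coincide, a point $\boldsymbol{x}\in\boldsymbol{X}$ and a sequence $\boldsymbol{x}_1,\boldsymbol{x}_2,\dots$ in $\boldsymbol{X}$ that logically converges to $\boldsymbol{x}$ but does not converge to $\boldsymbol{x}$ in $(\boldsymbol{X},\mathcal{T}_B)$.
   Context: Given a countable set $\Phi$ of atoms and a finite set $I$ of agents, $\mathcal{L}$ is the multi-agent modal language $\varphi::=\top\mid p\mid\neg\varphi\mid\varphi\wedge\varphi\mid\square_i\varphi$. A logic $\Lambda$ is a normal modal logic over $\mathcal{L}$ extending $K$; $\boldsymbol{\varphi}$ is the class of formulas $\Lambda$-equivalent to $\varphi$ and $\boldsymbol{\mathcal{L}}_\Lambda$ the set of such classes. Kripke models have countable nonempty state sets, relations $R_i$ ($i\in I$) and a valuation of $\Phi$; pointed Kripke models $Ms$ are evaluated with standard semantics. For a set $X$ of pointed Kripke models, the $\boldsymbol{\mathcal{L}}_\Lambda$ modal space is $\boldsymbol{X}=\{\boldsymbol{x}:x\in X\}$ with $\boldsymbol{x}=\{y\in X:y\vDash\varphi\text{ iff }x\vDash\varphi\text{ for all }\varphi\in\mathcal{L}\}$. A sequence $\boldsymbol{x}_1,\boldsymbol{x}_2,\dots$ logically converges to $\boldsymbol{x}$ if for every $\varphi$ with $x\vDash\varphi$ there is $N$ with $x_n\vDash\varphi$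 for all $n\ge N$. When modal equivalence and bisimilarity coincide on $X$, the $n$-bisimulation metric is $d_B(\boldsymbol{x},\boldsymbol{y})=0$ if $x$ and $y$ are $n$-bisimilar for all $n\in\mathbb{N}_0$, and $d_B(\boldsymbol{x},\boldsymbol{y})=2^{-n}$ for the least $n$ such that $x,y$ are not $n$-bisimilar; $\mathcal{T}_B$ is the topology it induces. *)

From Stdlib Require Import Reals ClassicalEpsilon.
Open Scope R_scope.

Set Implicit Arguments.

Section Modal.
Variables (Phi I : Type).

Inductive form : Type :=
| FTop : form
| FAtom : Phi -> form
| FNeg : form -> form
| FAnd : form -> form -> form
| FBox : I -> form -> form.

Definition FImp (a b : form) : form := FNeg (FAnd a (FNeg b)).

Record kmodel : Type := KModel {
  kst : Type;
  kst_countable : exists f : kst -> nat, forall s t, f s = f t -> s = t;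
  kst_nonempty : inhabited kst;
  krel : I -> kst -> kst -> Prop;
  kval : Phi -> kst -> Prop }.

Record pmodel : Type := PModel { pmod : kmodel; ppt : kst pmod }.

Fixpoint sat (M : kmodel) (s : kst M) (f : form) : Prop :=
  match f with
  | FTop => True
  | FAtom p => kval M p s
  | FNeg g => ~ sat M s g
  | FAnd g h => sat M s g /\ sat M s h
  | FBox i g => forall t, krel M i s t -> sat M t g
  end.

Definition psat (x : pmodel) (f : form) : Prop := sat (pmod x) (ppt x) f.

Fixpoint peval (v : Phi -> Prop) (w : I -> form -> Prop) (f : form) : Prop :=
  match f with
  | FTop => True
  | FAtom p => v p
  | FNeg g => ~ peval v w g
  | FAnd g h => peval v w g /\ peval v w h
  | FBox i g => w i g
  end.

Definition tautology (f : form) : Prop := forall v w, peval v w f.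

Fixpoint subst (sg : Phi -> form) (f : form) : form :=
  match f with
  | FTop => FTop
  | FAtom p => sg p
  | FNeg g => FNeg (subst sg g)
  | FAnd g h => FAnd (subst sg g) (subst sg h)
  | FBox i g => FBox i (subst sg g)
  end.

Definition normal_logic (L : form -> Prop) : Prop :=
  (forall f, tautology f -> L f) /\
  (forall i a b, L (FImp (FBox i (FImp a b)) (FImp (FBox i a) (FBox i b)))) /\
  (forall a b, L (FImp a b) -> L a -> L b) /\
  (forall i a, L a -> L (FBox i a)) /\
  (forall sg a, L a -> L (subst sg a)).

Definition modal_equiv (x y : pmodel) : Prop := forall f, psat x f <-> psat y f.

Definition is_bisimulation (M N : kmodel) (Z : kst M -> kst N -> Prop) : Prop :=
  forall s t, Z s t ->
    (forall p, kval M p s <-> kval N p t) /\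
    (forall i s', krel M i s s' -> exists t', krel N i t t' /\ Z s' t') /\
    (forall i t', krel N i t t' -> exists s', krel M i s s' /\ Z s' t').

Definition bisimilar (x y : pmodel) : Prop :=
  exists Z : kst (pmod x) -> kst (pmod y) -> Prop,
    is_bisimulation (pmod x) (pmod y) Z /\ Z (ppt x) (ppt y).

Fixpoint nbisim (n : nat) (M N : kmodel) (s : kst M) (t : kst N) : Prop :=
  (forall p, kval M p s <-> kval N p t) /\
  match n with
  | O => True
  | S m =>
      (forall i s', krel M i s s' -> exists t', krel N i t t' /\ nbisim m M N s' t') /\
      (forall i t', krel N i t t' -> exists s', krel M i s s' /\ nbisim m M N s' t')
  end.

Definition n_bisimilar (n : nat) (x y : pmodel) : Prop :=
  nbisim n (pmod x) (pmod y) (ppt x) (ppt y).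

(* The n-bisimulation metric d_B (on representatives of classes). *)
Definition least_non_nbisim (x y : pmodel) : nat :=
  epsilon (inhabits 0%nat)
    (fun n => ~ n_bisimilar n x y /\ forall m, (m < n)%nat -> n_bisimilar m x y).

Definition dB (x y : pmodel) : R :=
  if excluded_middle_informative (forall n, n_bisimilar n x y) then 0
  else (/ 2) ^ (least_non_nbisim x y).

Definition openB (X : pmodel -> Prop) (U : pmodel -> Prop) : Prop :=
  forall y, X y -> U y ->
    exists eps, eps > 0 /\ forall z, X z -> dB y z < eps -> U z.

Definition converges_TB (X : pmodel -> Prop) (xs : nat -> pmodel) (x : pmodel) : Prop :=
  forall U, openB X U -> U x -> exists N, forall n, (N <= n)%nat -> U (xs n).

Definition log_converges (xs : nat -> pmodel) (x : pmodel) : Prop :=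
  forall f, psat x f -> exists N, forall n, (N <= n)%nat -> psat (xs n) f.

End Modal.

From Stdlib Require Import Reals Lia Lra ClassicalEpsilon.

Set Implicit Arguments.

(* Take atoms p_0, p_1, ... and let x_n be the one-point model without
   successors in which exactly p_n holds, x the one in which no atom holds.
   A formula mentions only finitely many atoms, so from some n on it is
   evaluated alike at x_n and at x: the x_n converge logically to x.  But x_n
   and x already disagree on an atom, so they are not even 0-bisimilar and
   d_B(x, x_n) = 1 for every n.  On one-point models without successors both
   modal equivalence and bisimilarity reduce to agreement on atoms, and the
   logic is K, i.e. the formulas valid on all pointed models. *)

Section Modal.
Variables Phi I : Type.

Lemma sat_peval (M : kmodel Phi I) (s : kst M) (f : form Phi I) :
  peval (fun p => kval M p s) (fun i g => forall t, krel M i s t -> sat M t g) f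
  <-> sat M s f.
Proof. induction f; simpl; tauto. Qed.

Definition subst_model (M : kmodel Phi I) (sg : Phi -> form Phi I) : kmodel Phi I :=
  KModel (kst_countable M) (kst_nonempty M) (krel M) (fun p t => sat M t (sg p)).

Lemma sat_subst (M : kmodel Phi I) (sg : Phi -> form Phi I) (f : form Phi I) (s : kst M) :
  sat M s (subst sg f) <-> sat (subst_model M sg) s f.
Proof. induction f in s |- *; simpl; firstorder. Qed.

Definition valid (f : form Phi I) : Prop := forall x : pmodel Phi I, psat x f.

Lemma valid_normal : normal_logic valid.
Proof.
  unfold valid, psat; repeat split.
  - intros f Hf x. apply sat_peval, Hf.
  - intros i a b [M s]; simpl. intros [Hab HnK]. apply HnK. intros [Ha Hnb].
    apply Hnb. intros t Ht. apply NNPP. intros Hb.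
    exact (Hab t Ht (conj (Ha t Ht) Hb)).
  - intros a b Hab Ha x. specialize (Hab x). specialize (Ha x). simpl in Hab.
    apply NNPP. tauto.
  - intros i a Ha [M s] t _. exact (Ha (PModel M t)).
  - intros sg a Ha [M s]. apply sat_subst. exact (Ha (PModel (subst_model M sg) s)).
Qed.

Lemma bisimulation_sat (M N : kmodel Phi I) (Z : kst M -> kst N -> Prop)
    (HZ : is_bisimulation M N Z) (f : form Phi I) :
  forall s t, Z s t -> (sat M s f <-> sat N t f).
Proof.
  induction f; intros s t Hst; simpl.
  - tauto.
  - apply (HZ s t Hst).
  - rewrite (IHf s t Hst). tauto.
  - rewrite (IHf1 s t Hst), (IHf2 s t Hst). tauto.
  - destruct (HZ s t Hst) as [_ [Hforth Hback]].
    split; intros H.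
    + intros t' Ht'. destruct (Hback i t' Ht') as [s' [Hs' Hs't']].
      apply (IHf s' t' Hs't'), H, Hs'.
    + intros s' Hs'. destruct (Hforth i s' Hs') as [t' [Ht' Hs't']].
      apply (IHf s' t' Hs't'), H, Ht'.
Qed.

Lemma bisimilar_modal_equiv (x y : pmodel Phi I) : bisimilar x y -> modal_equiv x y.
Proof. intros [Z [HZ Hxy]] f. exact (bisimulation_sat HZ f _ _ Hxy). Qed.

Definition isolated (x : pmodel Phi I) : Prop := forall i t, ~ krel (pmod x) i (ppt x) t.

Lemma isolated_modal_equiv_bisimilar (x y : pmodel Phi I) :
  isolated x -> isolated y -> (modal_equiv x y <-> bisimilar x y).
Proof.
  intros Hx Hy. split; [|apply bisimilar_modal_equiv].
  intros Hxy. exists (fun s t => s = ppt x /\ t = ppt y). split; [|auto].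
  intros s t [-> ->]. split; [intros p; exact (Hxy (FAtom I p))|].
  split; intros i u Hu; [destruct (Hx i u Hu) | destruct (Hy i u Hu)].
Qed.

Lemma unit_countable : exists f : unit -> nat, forall s t, f s = f t -> s = t.
Proof. exists (fun _ => 0%nat). intros [] [] _. reflexivity. Qed.

Definition point_model (v : Phi -> Prop) : pmodel Phi I :=
  PModel (KModel unit_countable (inhabits tt) (fun _ _ _ => False) (fun p _ => v p)) tt.

Lemma point_model_isolated (v : Phi -> Prop) : isolated (point_model v).
Proof. intros i t []. Qed.

Lemma n_bisimilar0 (x y : pmodel Phi I) :
  n_bisimilar 0 x y <-> (forall p, kval (pmod x) p (ppt x) <-> kval (pmod y) p (ppt y)).
Proof. unfold n_bisimilar; simpl. tauto. Qed.

Lemma dB_not_n_bisimilar0 (x y : pmodel Phi I) : ~ n_bisimilar 0 x y -> dB x y = 1.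
Proof.
  intros H0. unfold dB.
  destruct excluded_middle_informative as [Hall|_]; [now elim H0|].
  unfold least_non_nbisim.
  set (P := fun n => ~ n_bisimilar n x y /\ forall m, (m < n)%nat -> n_bisimilar m x y).
  destruct (epsilon_spec (inhabits 0%nat) P) as [_ Hbelow].
  { exists 0%nat. split; [exact H0|intros m Hm; lia]. }
  destruct (epsilon (inhabits 0%nat) P) as [|k].
  - reflexivity.
  - elim H0. apply Hbelow. lia.
Qed.

Lemma openB_n_bisimilar0 (X : pmodel Phi I -> Prop) (x : pmodel Phi I) :
  openB X (n_bisimilar 0 x).
Proof.
  intros y _ Hxy. exists 1. split; [lra|]. intros z _ Hyz.
  destruct (classic (n_bisimilar 0 y z)) as [H|H].
  - apply n_bisimilar0. intros p.
    rewrite (proj1 (n_bisimilar0 x y) Hxy p). exact (proj1 (n_bisimilar0 y z) H p).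
  - rewrite (dB_not_n_bisimilar0 H) in Hyz. lra.
Qed.

Lemma converges_TB_n_bisimilar0 (X : pmodel Phi I -> Prop) xs (x : pmodel Phi I) :
  converges_TB X xs x -> exists N, forall n, (N <= n)%nat -> n_bisimilar 0 x (xs n).
Proof.
  intros Hc. apply Hc; [apply openB_n_bisimilar0|].
  apply n_bisimilar0. reflexivity.
Qed.

End Modal.

Fixpoint atom_bound {I : Type} (f : form nat I) : nat :=
  match f with
  | FTop _ _ => 0
  | FAtom _ p => p
  | FNeg g => atom_bound g
  | FAnd g h => Nat.max (atom_bound g) (atom_bound h)
  | FBox _ g => atom_bound g
  end.

Lemma psat_point_model_agree (I : Type) (v w : nat -> Prop) (f : form nat I) :
  (forall p, (p <= atom_bound f)%nat -> (v p <-> w p)) ->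
  (psat (point_model I v) f <-> psat (point_model I w) f).
Proof.
  unfold psat. induction f; simpl; intros Hvw.
  - tauto.
  - apply Hvw. lia.
  - rewrite IHf by exact Hvw. tauto.
  - rewrite IHf1, IHf2 by (intros p Hp; apply Hvw; lia). tauto.
  - split; intros _ t [].
Qed.

Definition no_atom_point : pmodel nat unit := point_model unit (fun _ => False).

Definition atom_point (k : nat) : pmodel nat unit := point_model unit (fun p => p = k).

Lemma atom_point_log_converges : log_converges atom_point no_atom_point.
Proof.
  intros f Hf. exists (S (atom_bound f)). intros n Hn.
  apply (psat_point_model_agree (fun p => p = n) (fun _ => False) f); [|exact Hf].
  intros p Hp. split; [lia|contradiction].
Qed.

Lemma atom_point_not_converges_TB (X : pmodel nat unit -> Prop) :
  ~ converges_TB X atom_point no_atom_point.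
Proof.
  intros Hc. destruct (converges_TB_n_bisimilar0 Hc) as [N HN].
  apply (proj1 (n_bisimilar0 _ _) (HN N (le_n N)) N). reflexivity.
Qed.

Theorem proposition1 :
  exists (Phi I : Type),
    (exists f : Phi -> nat, forall p q, f p = f q -> p = q) /\
    (exists l : list I, forall i, List.In i l) /\
    exists (Lam : form Phi I -> Prop) (X : pmodel Phi I -> Prop)
           (x : pmodel Phi I) (xs : nat -> pmodel Phi I),
      normal_logic Lam /\
      (forall y, X y -> forall f, Lam f -> psat y f) /\
      (forall y z, X y -> X z -> (modal_equiv y z <-> bisimilar y z)) /\
      X x /\ (forall n, X (xs n)) /\
      log_converges xs x /\
      ~ converges_TB X xs x.
Proof.
  exists nat, unit.
  split; [exists (fun p => p); auto|].
  split; [exists (cons tt nil); intros []; left; reflexivity|].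
  exists (@valid nat unit), (@isolated nat unit), no_atom_point, atom_point.
  split; [apply valid_normal|].
  split; [intros y _ f Hf; apply Hf|].
  split; [intros y z; apply isolated_modal_equiv_bisimilar|].
  split; [apply point_model_isolated|].
  split; [intros n; apply point_model_isolated|].
  split; [apply atom_point_log_converges|apply atom_point_not_converges_TB].
Qed.
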